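(* Let $P(x)=a_2x^2+a_1x+a_0$ and $R(x)=b_2x^2+b_1x$ be complex polynomials with $a_2,b_2\ne0$. For $n\ge0$ and $\alpha\in\mathbb C$ let $F(n,\alpha)=\prod_{z\in P^{-1}(R^{-n}(\alpha))}z$, the product of the $2^{n+1}$ roots, counted with multiplicity, of $R^{\circ n}(P(z))=\alpha$. Then $F(n,\alpha)=c_{n,1}\alpha+c_{n,0}$ with $c_{n,1}=-\frac{b_2}{(a_2b_2)^{2^n}}$ and $c_{n,0}=\frac{1}{(a_2b_2)^{2^n}}\big(H(n)-\frac{b_1}{2}\big)$, where $H(0)=a_0b_2+\frac{b_1}{2}$ and $H(n)=H(n-1)^2+\frac{b_1(2-b_1)}{4}$ for $n\ge1$.
   Context: $R^{\circ n}$ denotes the $n$-fold composition ($R^{\circ0}=\mathrm{id}$); $R^{-n}(\alpha)$ is the multiset of roots of $R^{\circ n}(w)=\alpha$ and $P^{-1}(S)$ the multiset union of the roots of $P(z)=w$ over $w\in S$. *)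

(* complex numbers as [complex R] = R[i] for R : realType (i.e. C). *)
From HB Require Import structures.
From mathcomp Require Import all_boot all_order all_algebra.
From mathcomp Require Import reals.
From mathcomp Require Import complex.
Set Implicit Arguments. Unset Strict Implicit. Unset Printing Implicit Defensive.
Import Order.TTheory GRing.Theory Num.Theory.
Local Open Scope ring_scope.

Definition poly_iter (F : nzRingType) (R : {poly F}) (n : nat) : {poly F} :=
  iter n (fun q => R \Po q) 'X.

Definition roots_with_mult (F : nzRingType) (p : {poly F}) (rs : seq F) : Prop :=
  p = lead_coef p *: \prod_(z <- rs) ('X - z%:P).

Fixpoint Hseq (F : fieldType) (a0 b1 b2 : F) (n : nat) : F :=
  match n with
  | 0 => a0 * b2 + b1 / 2%:R
  | m.+1 => (Hseq a0 b1 b2 m) ^+ 2 + b1 * (2%:R - b1) / 4%:R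
  end.

From HB Require Import structures.
From mathcomp Require Import all_boot all_order all_algebra.
From mathcomp Require Import reals.
From mathcomp Require Import complex.
From mathcomp Require Import ring.
Set Implicit Arguments. Unset Strict Implicit. Unset Printing Implicit Defensive.
Import Order.TTheory GRing.Theory Num.Theory.
Local Open Scope ring_scope.

(* The polynomial [R^{o n} o P - alpha] has degree 2^(n+1), which is even, so by
   Vieta the product of its roots is its constant term divided by its leading
   coefficient.  The leading coefficient is [a2^(2^n) b2^(2^n - 1)], since each
   composition with [R] squares it and multiplies it by [b2].  For the constant
   term [y_n = (R^{o n} o P)(0)] we have [y_0 = a0] and [y_(n+1) = R(y_n)]; the
   substitution [h = b2 y + b1/2] conjugates [y |-> b2 y^2 + b1 y] to
   [h |-> h^2 + b1 (2 - b1)/4], which is the recursion defining [H]. *)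

Lemma horner0_roots_with_mult (F : comNzRingType) (p : {poly F}) rs :
  roots_with_mult p rs ->
  p.[0] = lead_coef p * ((-1) ^+ size rs * \prod_(z <- rs) z).
Proof. by move=> p_rs; rewrite {1}p_rs hornerZ horner_coef0 coef0_prod_XsubC. Qed.

Lemma size_roots_with_mult (F : idomainType) (p : {poly F}) rs :
  p != 0 -> roots_with_mult p rs -> size rs = (size p).-1.
Proof.
by move=> p_neq0 p_rs; rewrite p_rs size_scale ?lead_coef_eq0 // size_prod_XsubC.
Qed.

Lemma prod_roots_with_mult (F : fieldType) (p : {poly F}) rs :
  p != 0 -> roots_with_mult p rs ->
  \prod_(z <- rs) z = (-1) ^+ (size p).-1 * p.[0] / lead_coef p.
Proof.
move=> p_neq0 p_rs; have lp_neq0 : lead_coef p != 0 by rewrite lead_coef_eq0.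
rewrite (horner0_roots_with_mult p_rs) -(size_roots_with_mult p_neq0 p_rs).
by rewrite mulrCA signrMK mulrC mulKf.
Qed.

Section Quadratic.

Variables (F : idomainType) (c d e : F).
Hypothesis c_neq0 : c != 0.

Let size_linear_lt : (size (d *: 'X + e%:P)%R < size (c *: 'X^2)%R)%N.
Proof.
rewrite size_scale // size_polyXn ltnS (leq_trans (size_polyD _ _)) // geq_max.
by rewrite (leq_trans (size_scale_leq _ _)) ?size_polyX // (leq_trans (size_polyC_leq1 _)).
Qed.

Lemma size_quadratic : size (c *: 'X^2 + d *: 'X + e%:P) = 3%N.
Proof. by rewrite -addrA size_polyDl // size_scale // size_polyXn. Qed.

Lemma lead_coef_quadratic : lead_coef (c *: 'X^2 + d *: 'X + e%:P) = c.
Proof. by rewrite -addrA lead_coefDl // lead_coefZ lead_coefXn mulr1. Qed.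

End Quadratic.

Section IteratedComposition.

Variable F : idomainType.
Implicit Types p q R P : {poly F}.

Lemma poly_iter0_comp R P : poly_iter R 0 \Po P = P.
Proof. exact: comp_polyX. Qed.

Lemma poly_iterS_comp R P m :
  poly_iter R m.+1 \Po P = R \Po (poly_iter R m \Po P).
Proof. by rewrite /poly_iter iterS comp_polyA. Qed.

Lemma size_comp_poly_gt1 p q :
  p != 0 -> (1 < size q)%N -> size (p \Po q) = ((size p).-1 * (size q).-1).+1.
Proof.
by move=> p_neq0 q_gt1; rewrite -size_comp_poly prednK // size_poly_gt0 comp_poly_eq0.
Qed.

Lemma size_iter_comp R P m : (1 < size R)%N -> (1 < size P)%N ->
  size (poly_iter R m \Po P) = ((size R).-1 ^ m * (size P).-1).+1.
Proof.
move=> R_gt1 P_gt1; elim: m => [|m IH].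
  by rewrite poly_iter0_comp mul1n prednK // ltnW.
have G_gt1 : (1 < size (poly_iter R m \Po P))%N.
  by rewrite IH ltnS muln_gt0 expn_gt0 !ltn_predRL R_gt1 P_gt1.
rewrite poly_iterS_comp size_comp_poly_gt1 //; last by rewrite -size_poly_gt0 ltnW.
by rewrite IH expnS mulnA.
Qed.

Lemma size_iter_comp_gt1 R P m : (1 < size R)%N -> (1 < size P)%N ->
  (1 < size (poly_iter R m \Po P))%N.
Proof.
move=> R_gt1 P_gt1.
by rewrite size_iter_comp // ltnS muln_gt0 expn_gt0 !ltn_predRL R_gt1 P_gt1.
Qed.

Lemma lead_coef_iter_comp_quadratic R P m : size R = 3%N -> (1 < size P)%N ->
  lead_coef (poly_iter R m \Po P) * lead_coef R
    = (lead_coef P * lead_coef R) ^+ (2 ^ m).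
Proof.
move=> R3 P_gt1; elim: m => [|m IH]; first by rewrite poly_iter0_comp.
have G_gt1 : (1 < size (poly_iter R m \Po P))%N by rewrite size_iter_comp_gt1 ?R3.
rewrite poly_iterS_comp lead_coef_comp // R3 expnS mulnC exprM -IH; ring.
Qed.

End IteratedComposition.

Lemma horner0_iter_comp_quadratic (F : fieldType) (b2 b1 : F) (P : {poly F}) m :
  2%:R != 0 :> F ->
  b2 * (poly_iter (b2 *: 'X^2 + b1 *: 'X) m \Po P).[0]
    = Hseq P.[0] b1 b2 m - b1 / 2%:R.
Proof.
move=> two_neq0; elim: m => [|m IH]; first by rewrite poly_iter0_comp /=; ring.
rewrite poly_iterS_comp horner_comp [Hseq _ _ _ _.+1]/=.
set y := (poly_iter _ m \Po P).[0] in IH *.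
have -> : Hseq P.[0] b1 b2 m = b2 * y + b1 / 2%:R by rewrite IH subrK.
rewrite hornerD !hornerZ hornerXn hornerX; field.
by rewrite two_neq0 (natrM F 2 2) mulf_neq0.
Qed.

Theorem lemma5p5 (R : realType) (a2 a1 a0 b2 b1 : R[i]) :
  a2 != 0 -> b2 != 0 ->
  let P : {poly R[i]} := a2 *: 'X^2 + a1 *: 'X + a0%:P in
  let Rp : {poly R[i]} := b2 *: 'X^2 + b1 *: 'X in
  forall (n : nat) (alpha : R[i]) (rs : seq R[i]),
    roots_with_mult ((poly_iter Rp n \Po P) - alpha%:P) rs ->
    \prod_(z <- rs) z =
      (- b2 / (a2 * b2) ^+ (2 ^ n)) * alpha
      + (Hseq a0 b1 b2 n - b1 / 2%:R) / (a2 * b2) ^+ (2 ^ n).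
Proof.
move=> a2_neq0 b2_neq0 P Rp n alpha rs G_rs.
set G := poly_iter Rp n \Po P.
have [sizeP leadP] := (size_quadratic a1 a0 a2_neq0, lead_coef_quadratic a1 a0 a2_neq0).
have [sizeR leadR] : size Rp = 3%N /\ lead_coef Rp = b2.
  by rewrite -[Rp]addr0 size_quadratic ?lead_coef_quadratic.
have sizeG : size G = (2 ^ n.+1).+1 by rewrite size_iter_comp ?sizeR ?sizeP // expnSr.
have leadG : lead_coef G * b2 = (a2 * b2) ^+ (2 ^ n).
  by rewrite -{1}leadR -leadP lead_coef_iter_comp_quadratic ?leadR ?sizeP.
have P0 : P.[0] = a0.
  by rewrite !hornerD !hornerZ hornerXn hornerX hornerC expr0n /= !mulr0 !add0r.
have G0 : b2 * G.[0] = Hseq a0 b1 b2 n - b1 / 2%:R.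
  by rewrite horner0_iter_comp_quadratic ?pnatr_eq0 ?P0.
have C_lt_G : (size (- alpha%:P) < size G)%N.
  by rewrite size_polyN (leq_ltn_trans (size_polyC_leq1 _)) // sizeG ltnS expn_gt0.
have leadG_neq0 : lead_coef G != 0 by rewrite lead_coef_eq0 -size_poly_gt0 sizeG.
have GC_neq0 : G - alpha%:P != 0 by rewrite -size_poly_gt0 size_polyDl // sizeG.
rewrite (prod_roots_with_mult GC_neq0 G_rs) size_polyDl // lead_coefDl // sizeG.
rewrite expnSr exprM sqrr_sign mul1r hornerD hornerN hornerC -leadG -G0.
by field; rewrite leadG_neq0 b2_neq0.
Qed.
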